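(* Let $n\ge 1$ and, for $i=1,\dots,n$, let $f_i:\mathbb{R}^{d_i}\to\mathbb{R}$, $A_i\in\mathbb{R}^{p\times d_i}$, and let $b\in\mathbb{R}^p$. Set $d=\sum_i d_i$, $\mathbf{x}=[x_1^\top,\dots,x_n^\top]^\top\in\mathbb{R}^d$, $f(\mathbf{x})=\sum_{i=1}^n f_i(x_i)$, $A=[A_1,\dots,A_n]\in\mathbb{R}^{p\times d}$. Consider the problem $\min_{\mathbf{x}\in\mathbb{R}^d} f(\mathbf{x})$ subject to $A\mathbf{x}=b$ (i.e. all local constraint sets are $\mathcal{X}_i=\mathbb{R}^{d_i}$), assumed to have at least one optimal solution. Suppose each $f_i$ is convex and differentiable on $\mathbb{R}^{d_i}$ with locally Lipschitz gradient $\nabla f_i$, and that there exists $\mathbf{x}$ with $A\mathbf{x}=b$. Fix $\alpha>0$ and consider the augmented primal-dual gradient dynamics (APGD) $$\dot{\mathbf{x}}=-\alpha\big(\nabla f(\mathbf{x})+A^\top\lambda\big)-A^\top(A\mathbf{x}-b),\qquad \dot\lambda=A\mathbf{x}-b,$$ where $\nabla f(\mathbf{x})=[\nabla f_1(x_1)^\top,\dots,\nabla f_n(x_n)^\top]^\top$. Then for every initial point $(\mathbf{x}(0),\lambda(0))\in\mathbb{R}^d\times\mathbb{R}^p$, the trajectory $(\mathbf{x}(t),\lambda(t))$ converges to a saddle point of the augmented Lagrangian $\mathcal{L}_\alpha(\mathbf{x},\lambda)=f(\mathbf{x})+\lambda^\top(A\mathbf{x}-b)+\frac{1}{2\alpha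}\|A\mathbf{x}-b\|^2$.
   Context: A saddle point of $\mathcal{L}_\alpha$ is a pair $(\mathbf{x}^*,\lambda^* )\in\mathbb{R}^d\times\mathbb{R}^p$ with $\mathcal{L}_\alpha(\mathbf{x}^*,\lambda)\le\mathcal{L}_\alpha(\mathbf{x}^*,\lambda^* )\le\mathcal{L}_\alpha(\mathbf{x},\lambda^* )$ for all $\mathbf{x}\in\mathbb{R}^d$, $\lambda\in\mathbb{R}^p$. No structural assumption on $A$ (such as full row rank) is made. *)

From HB Require Import structures.
From mathcomp Require Import all_boot all_order all_algebra.
From mathcomp Require Import all_classical all_reals all_analysis.
Set Implicit Arguments. Unset Strict Implicit. Unset Printing Implicit Defensive.
Import Order.TTheory GRing.Theory Num.Theory.
Import numFieldNormedType.Exports.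
Local Open Scope classical_set_scope.
Local Open Scope ring_scope.

Definition dotv (R : realType) (k : nat) (u v : 'cV[R]_k) : R :=
  \sum_(j < k) u j 0 * v j 0.

Definition convex_fun (R : realType) (k : nat) (h : 'cV[R]_k -> R) : Prop :=
  forall (x y : 'cV[R]_k) (t : R), 0 <= t -> t <= 1 ->
    h (t *: x + (1 - t) *: y) <= t * h x + (1 - t) * h y.

Definition is_gradient (R : realType) (k : nat)
    (h : 'cV[R]_k -> R) (g : 'cV[R]_k -> 'cV[R]_k) : Prop :=
  forall x : 'cV[R]_k, differentiable h x /\
    forall v : 'cV[R]_k, ('d h x : 'cV[R]_k -> R) v = dotv (g x) v.

Definition locally_lipschitz (R : realType) (k m : nat)
    (g : 'cV[R]_k -> 'cV[R]_m) : Prop :=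
  forall x : 'cV[R]_k, exists r : R, exists K : R, 0 < r /\
    forall y z : 'cV[R]_k, ball x r y -> ball x r z ->
      `|g y - g z| <= K * `|y - z|.

Unset Implicit Arguments.
Section Problem.
Variables (R : realType) (n : nat) (d : 'I_n -> nat) (p : nat).
Variables (f : forall i : 'I_n, 'cV[R]_(d i) -> R)
          (A : forall i : 'I_n, 'M[R]_(p, d i)) (b : 'cV[R]_p).

(* block vector x = [x_1; ...; x_n] *)
Definition bvec : Type := forall i : 'I_n, 'cV[R]_(d i).

Definition fsum (x : bvec) : R := \sum_(i < n) f i (x i).

Definition resid (x : bvec) : 'cV[R]_p := (\sum_(i < n) (A i *m x i)) - b.

Definition feasible (x : bvec) : Prop := resid x = 0.

Definition is_optimal (x : bvec) : Prop :=
  feasible x /\ forall y : bvec, feasible y -> fsum x <= fsum y.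

Definition aug_lagrangian (alpha : R) (x : bvec) (lam : 'cV[R]_p) : R :=
  fsum x + dotv lam (resid x) + (2 * alpha)^-1 * dotv (resid x) (resid x).

Definition is_saddle_point (alpha : R) (xs : bvec) (ls : 'cV[R]_p) : Prop :=
  (forall lam : 'cV[R]_p, aug_lagrangian alpha xs lam <= aug_lagrangian alpha xs ls)
  /\ (forall x : bvec, aug_lagrangian alpha xs ls <= aug_lagrangian alpha x ls).

(* (x, lam) : [0, +oo) -> R^d x R^p is a solution of APGD, where
   g i is the gradient of f i: differentiable for t > 0 with the APGD
   right-hand side, and right-continuous at t = 0. *)
Definition apgd_solution (g : forall i : 'I_n, 'cV[R]_(d i) -> 'cV[R]_(d i))
    (alpha : R) (x : forall i : 'I_n, R -> 'cV[R]_(d i)) (lam : R -> 'cV[R]_p)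
    : Prop :=
  let xt (t : R) : bvec := fun i => x i t in
  (forall t : R, 0 < t ->
     (forall i : 'I_n,
        is_derive t 1 (x i)
          (- alpha *: (g i (x i t) + (A i)^T *m lam t)
           - (A i)^T *m resid (xt t)))
     /\ is_derive t 1 lam (resid (xt t)))
  /\ (forall i : 'I_n, x i @ 0^'+ --> x i 0)
  /\ lam @ 0^'+ --> lam 0.

End Problem.
Arguments fsum {R n d} f x.
Arguments resid {R n d p} A b x.
Arguments feasible {R n d p} A b x.
Arguments is_optimal {R n d p} f A b x.
Arguments aug_lagrangian {R n d p} f A b alpha x lam.
Arguments is_saddle_point {R n d p} f A b alpha xs ls.
Arguments apgd_solution {R n d p} A b g alpha x lam.
Arguments bvec {R n} d.

From HB Require Import structures.
From mathcomp Require Import all_boot all_order all_algebra.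
From mathcomp Require Import all_classical all_reals all_analysis.
From mathcomp Require Import lra ring.
Import Order.TTheory GRing.Theory Num.Theory.
Import numFieldNormedType.Exports.
Local Open Scope classical_set_scope.
Local Open Scope ring_scope.

(* Take a KKT pair (xs, ls); one exists since at an optimum the gradient of f is
   orthogonal to ker A, hence lies in the range of A^T.  Along APGD the weighted
   distance W = |x - xs|^2 + alpha |lam - ls|^2 satisfies W' <= -2 |Ax - b|^2, and
   the augmented Lagrangian satisfies L' = |Ax - b|^2 - alpha |grad_x L|^2.  So
   L + W decreases at least at the rate D = alpha |grad_x L|^2 + |Ax - b|^2, and
   as L + W >= f(xs), D becomes arbitrarily small at arbitrarily late times.  The
   trajectory is bounded because W is, so along these times it clusters at a
   point where D = 0, i.e. at a new KKT pair, which is a saddle point of L.  With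
   this pair in place of (xs, ls), W is nonincreasing and gets arbitrarily small,
   so the whole trajectory converges to it. *)

Section dotv.
Context {R : realType}.

Lemma dotvC {k} (u v : 'cV[R]_k) : dotv u v = dotv v u.
Proof. by apply: eq_bigr => j _; rewrite mulrC. Qed.

Lemma dotvDl {k} (u w v : 'cV[R]_k) : dotv (u + w) v = dotv u v + dotv w v.
Proof. by rewrite /dotv -big_split; apply: eq_bigr => j _; rewrite !mxE mulrDl. Qed.

Lemma dotvDr {k} (v u w : 'cV[R]_k) : dotv v (u + w) = dotv v u + dotv v w.
Proof. by rewrite dotvC dotvDl !(dotvC v). Qed.

Lemma dotvZl {k} a (u v : 'cV[R]_k) : dotv (a *: u) v = a * dotv u v.
Proof. by rewrite /dotv mulr_sumr; apply: eq_bigr => j _; rewrite !mxE mulrA. Qed.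

Lemma dotvZr {k} a (v u : 'cV[R]_k) : dotv v (a *: u) = a * dotv v u.
Proof. by rewrite dotvC dotvZl dotvC. Qed.

Lemma dotvNl {k} (u v : 'cV[R]_k) : dotv (- u) v = - dotv u v.
Proof. by rewrite -scaleN1r dotvZl mulN1r. Qed.

Lemma dotvNr {k} (v u : 'cV[R]_k) : dotv v (- u) = - dotv v u.
Proof. by rewrite dotvC dotvNl dotvC. Qed.

Lemma dotvBl {k} (u w v : 'cV[R]_k) : dotv (u - w) v = dotv u v - dotv w v.
Proof. by rewrite dotvDl dotvNl. Qed.

Lemma dotvBr {k} (v u w : 'cV[R]_k) : dotv v (u - w) = dotv v u - dotv v w.
Proof. by rewrite dotvDr dotvNr. Qed.

Lemma dotv0l {k} (v : 'cV[R]_k) : dotv 0 v = 0.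
Proof. by rewrite -(scale0r (0 : 'cV[R]_k)) dotvZl mul0r. Qed.

Lemma dotv0r {k} (v : 'cV[R]_k) : dotv v 0 = 0.
Proof. by rewrite dotvC dotv0l. Qed.

Lemma dotv_suml {k} (I : finType) (F : I -> 'cV[R]_k) v :
  dotv (\sum_i F i) v = \sum_i dotv (F i) v.
Proof.
elim/big_rec2: _ => [|i y1 y2 _ <-]; first by rewrite dotv0l.
by rewrite dotvDl.
Qed.

Lemma dotv_sumr {k} (I : finType) (F : I -> 'cV[R]_k) v :
  dotv v (\sum_i F i) = \sum_i dotv v (F i).
Proof. by rewrite dotvC dotv_suml; apply: eq_bigr => i _; rewrite dotvC. Qed.

Lemma dotv_mull {k l} (M : 'M[R]_(k, l)) (u : 'cV[R]_l) (v : 'cV[R]_k) :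
  dotv (M *m u) v = dotv u (M^T *m v).
Proof.
have dotvE m (u' v' : 'cV[R]_m) : dotv u' v' = (u'^T *m v') 0 0.
  by rewrite !mxE; apply: eq_bigr => j _; rewrite !mxE.
by rewrite !dotvE trmx_mul mulmxA.
Qed.

Lemma dotv_mulr {k l} (M : 'M[R]_(k, l)) (v : 'cV[R]_k) (u : 'cV[R]_l) :
  dotv v (M *m u) = dotv (M^T *m v) u.
Proof. by rewrite dotvC dotv_mull dotvC. Qed.

Lemma dotv_coord_le {k} (u : 'cV[R]_k) j : u j 0 ^+ 2 <= dotv u u.
Proof.
rewrite /dotv (bigD1 j) //= -expr2 lerDl.
by apply: sumr_ge0 => i _; rewrite -expr2 sqr_ge0.
Qed.

Lemma dotv_ge0 {k} (u : 'cV[R]_k) : 0 <= dotv u u.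
Proof. by apply: sumr_ge0 => j _; rewrite -expr2 sqr_ge0. Qed.

Lemma dotv_eq0 {k} (u : 'cV[R]_k) : dotv u u = 0 -> u = 0.
Proof.
move=> u0; apply/matrixP => j j'; rewrite ord1 mxE; apply/eqP.
by rewrite -sqrf_eq0 eq_le sqr_ge0 andbT -u0 dotv_coord_le.
Qed.

End dotv.

Section calculus.
Context {R : realType}.

Lemma is_derive_mxP {m k} (X : R -> 'M[R]_(m, k)) (t : R) (dX : 'M[R]_(m, k)) :
  is_derive t 1 X dX <-> forall i j, is_derive t 1 (fun s => X s i j) (dX i j).
Proof.
split => [dXt i j | dXij].
  have Xt : derivable X t 1 by case: dXt.
  apply: DeriveDef; first exact: (derivable_mxP X t 1).1 Xt i j.
  by have := derive_mx Xt; rewrite derive_val => ->; rewrite mxE.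
have Xt : derivable X t 1 by apply/derivable_mxP => i j; case: (dXij i j).
apply: DeriveDef => //; rewrite derive_mx //.
by apply/matrixP => i j; rewrite mxE; case: (dXij i j).
Qed.

Lemma is_derive_dotv {k} {X Y : R -> 'cV[R]_k} {t : R} {dX dY} :
  is_derive t 1 X dX -> is_derive t 1 Y dY ->
  is_derive t 1 (fun s => dotv (X s) (Y s)) (dotv dX (Y t) + dotv (X t) dY).
Proof.
(* Instance resolution derives the sum below from [dXt] and [dYt]. *)
move=> /is_derive_mxP dXt /is_derive_mxP dYt.
have -> : (fun s => dotv (X s) (Y s)) = \sum_(j < k) (fun s => X s j 0 * Y s j 0).
  by apply: funext => s; rewrite /dotv fct_sumE.
apply: is_derive_eq; rewrite /dotv -big_split; apply: eq_bigr => j _ /=.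
by rewrite addrC; congr (_ + _); exact: mulrC.
Qed.

Lemma is_derive_mulmx {m k} (M : 'M[R]_(m, k)) {X : R -> 'cV[R]_k} {t : R} {dX} :
  is_derive t 1 X dX -> is_derive t 1 (fun s => M *m X s) (M *m dX).
Proof.
move=> /is_derive_mxP dXt; apply/is_derive_mxP => i j.
have -> : (fun s => (M *m X s) i j) = \sum_(l < k) (fun s => M i l * X s l j).
  by apply: funext => s; rewrite mxE fct_sumE.
by apply: is_derive_eq; rewrite mxE.
Qed.

Lemma is_derive_grad {k} {h : 'cV[R]_k -> R} {g : 'cV[R]_k -> 'cV[R]_k}
    {X : R -> 'cV[R]_k} {t : R} {dX} :
  is_gradient h g -> is_derive t 1 X dX ->
  is_derive t 1 (fun s => h (X s)) (dotv (g (X t)) dX).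
Proof.
move=> hg dXt; have [dh dhg] := hg (X t).
have Xdiff : differentiable X t by apply/derivable1_diffP; exact: ex_derive.
have hXdiff : differentiable (h \o X) t by exact: differentiable_comp.
apply: DeriveDef; first exact: diff_derivable.
rewrite (deriveE _ hXdiff) diff_comp // /= -dhg; congr ('d h (X t) _).
by rewrite -deriveE // derive_val.
Qed.

Lemma is_derive_line {k} (v x : 'cV[R]_k) (t : R) :
  is_derive t 1 (fun s : R => s *: v + x) v.
Proof.
have dsv : is_derive t 1 (fun s : R => s *: v) v.
  apply: DeriveDef; first exact: diff_derivable.
  by rewrite deriveE // diff_val scale1r.
by have := is_deriveD dsv (is_derive_cst x t 1); rewrite addr0.
Qed.

Lemma derive_le0_nonincr (phi dphi : R -> R) (a : R) :
  (forall t, a <= t -> is_derive t 1 phi (dphi t)) -> (forall t, a < t -> dphi t <= 0) ->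
  forall u w, a <= u -> u <= w -> phi w <= phi u.
Proof.
move=> dphi_ dphi_le0; apply: ler0_derive1_nincry.
- by move=> t; rewrite in_itv /= andbT => /ltW /dphi_ [].
- move=> t; rewrite in_itv /= andbT => at_.
  by rewrite derive1E; have [_ ->] := dphi_ t (ltW at_); exact: dphi_le0.
- apply: continuous_in_subspaceT => t; rewrite inE /= in_itv /= andbT => at_.
  by apply/differentiable_continuous/derivable1_diffP; case: (dphi_ t at_).
Qed.

Lemma derive_le_slope {phi : R -> R} {D c : R} : is_derive (0 : R) 1 phi D ->
  (forall s, 0 < s < 1 -> phi s - phi 0 <= s * c) -> D <= c.
Proof.
move=> [dphi <-] slope.
rewrite ['D_1 phi 0]cvg_at_rightE //; apply: limr_le.
  rewrite -(cvg_at_rightE (fun s : R => s^-1 *: ((phi \o shift 0) _ - phi 0))) //.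
  apply: cvg_trans dphi; apply: cvg_app => A [e e0 Ae].
  by exists e => // z ze z0; apply: Ae => //; exact/lt0r_neq0.
near=> s.
have s0 : 0 < s by near: s; exact: nbhs_right_gt.
have s1 : s < 1 by near: s; exact: nbhs_right_lt.
rewrite /= [_%:A]mulr1 addr0 -[s^-1 *: _]/(s^-1 * _).
by rewrite ler_pdivrMl // slope // s0 s1.
Unshelve. all: by end_near. Qed.

End calculus.

Section convex_gradient.
Context {R : realType} {k : nat} (h : 'cV[R]_k -> R) (g : 'cV[R]_k -> 'cV[R]_k).
Hypotheses (h_convex : convex_fun h) (h_grad : is_gradient h g).

Lemma convex_gradient_le x y : h x + dotv (g x) (y - x) <= h y.
Proof.
pose phi (s : R) := h (s *: (y - x) + x).
have dphi : is_derive (0 : R) 1 phi (dotv (g x) (y - x)).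
  by have := is_derive_grad h_grad (is_derive_line (y - x) x 0); rewrite scale0r add0r.
rewrite -lerBrDl; apply: (derive_le_slope dphi) => s /andP[s0 s1].
have -> : phi s = h (s *: y + (1 - s) *: x).
  by rewrite /phi scalerBr scalerBl scale1r -addrA [- _ + _]addrC.
have := h_convex y x s (ltW s0) (ltW s1).
rewrite /phi scale0r add0r; lra.
Qed.

Lemma gradient_monotone x y : 0 <= dotv (x - y) (g x - g y).
Proof.
move: (convex_gradient_le x y) (convex_gradient_le y x).
rewrite -(opprB x y) dotvNr dotvBr [dotv (g x) _]dotvC [dotv (g y) _]dotvC; lra.
Qed.

End convex_gradient.
Arguments convex_gradient_le {R k h g}.
Arguments gradient_monotone {R k h g}.

Lemma sym_mx_range_orth {R : realType} {p : nat} (P : 'M[R]_p) (y : 'cV[R]_p) :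
  P^T = P -> (forall c, P *m c = 0 -> dotv y c = 0) -> exists mu, P *m mu = y.
Proof.
move=> Psym yorth.
have /submxP [D yD] : (y^T <= P)%MS.
  rewrite submxE; apply/eqP/matrixP => i j; rewrite [RHS]mxE ord1.
  have Pc : P *m col j (cokermx P) = 0 by rewrite colE mulmxA mulmx_coker mul0mx.
  by rewrite -(yorth _ Pc) !mxE; apply: eq_bigr => l _; rewrite !mxE.
by exists D^T; rewrite -[y]trmxK yD trmx_mul Psym.
Qed.

Section kkt.
Context {R : realType} {n : nat} {d : 'I_n -> nat} {p : nat}.
Variables (f : forall i, 'cV[R]_(d i) -> R) (g : forall i, 'cV[R]_(d i) -> 'cV[R]_(d i))
  (A : forall i, 'M[R]_(p, d i)) (b : 'cV[R]_p).
Hypotheses (f_convex : forall i, convex_fun (f i))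
  (f_grad : forall i, is_gradient (f i) (g i)).

Definition is_kkt (xs : bvec d) (ls : 'cV[R]_p) :=
  feasible A b xs /\ forall i, g i (xs i) + (A i)^T *m ls = 0.

Lemma resid_feasible_sub (x : bvec d) {xs : bvec d} : feasible A b xs ->
  resid A b x = \sum_i A i *m (x i - xs i).
Proof.
move=> xs_feas; under eq_bigr do rewrite mulmxBr.
suff -> : b = \sum_i A i *m xs i by rewrite sumrB.
by apply/eqP; rewrite eq_sym -subr_eq0; apply/eqP.
Qed.

Lemma kkt_fsum_le {xs ls} y : is_kkt xs ls ->
  fsum f xs <= fsum f y + dotv ls (resid A b y).
Proof.
move=> [xs_feas xs_stat]; rewrite (resid_feasible_sub y xs_feas) dotv_sumr.
rewrite /fsum -big_split /=; apply: ler_sum => i _.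
have /eqP : g i (xs i) = - ((A i)^T *m ls) by apply/eqP; rewrite -addr_eq0 xs_stat.
have := convex_gradient_le (f_convex i) (f_grad i) (xs i) (y i).
by rewrite dotv_mulr => /[swap] /eqP ->; rewrite dotvNl; lra.
Qed.

Lemma kkt_saddle alpha xs ls : 0 < alpha -> is_kkt xs ls ->
  is_saddle_point f A b alpha xs ls.
Proof.
move=> alpha_gt0 kkt; have [xs_feas _] := kkt.
split => [lam | x]; first by rewrite /aug_lagrangian xs_feas !dotv0r mulr0.
rewrite /aug_lagrangian xs_feas !dotv0r mulr0 !addr0.
have := kkt_fsum_le x kkt.
have : 0 <= (2 * alpha)^-1 * dotv (resid A b x) (resid A b x).
  by rewrite mulr_ge0 ?dotv_ge0 // invr_ge0 mulr_ge0 // ltW.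
lra.
Qed.

Lemma optimal_orthogonal {xo} : is_optimal f A b xo ->
  forall k : bvec d, \sum_i A i *m k i = 0 -> \sum_i dotv (g i (xo i)) (k i) = 0.
Proof.
move=> [xo_feas xo_min] k Ak0.
pose phi (s : R) := \sum_i f i (s *: k i + xo i).
have dphi (s : R) : is_derive s 1 phi (\sum_i dotv (g i (s *: k i + xo i)) (k i)).
  have -> : phi = \sum_i (fun s => f i (s *: k i + xo i)).
    by apply: funext => z; rewrite /phi fct_sumE.
  by apply: is_derive_sum => i; exact: is_derive_grad (f_grad i) (is_derive_line _ _ _).
have phi_min s : phi 0 <= phi s.
  have -> : phi 0 = fsum f xo by apply: eq_bigr => i _; rewrite scale0r add0r.
  apply: xo_min; rewrite /feasible /resid.
  under eq_bigr do rewrite mulmxDr -scalemxAr.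
  by rewrite big_split /= -scaler_sumr Ak0 scaler0 add0r.
have dphi0 : is_derive (0 : R) 1 phi 0.
  by apply: (@derive1_at_min _ phi (-1) 1 0); rewrite // in_itv /= ltrN10 ltr01.
have dphi0' : is_derive (0 : R) 1 phi (\sum_i dotv (g i (xo i)) (k i)).
  by apply: (is_derive_eq (dphi 0)); under eq_bigr do rewrite scale0r add0r.
by case: dphi0' => _ <-; case: dphi0.
Qed.

(* Solve [A A^T mu = A G] for the gradient [G] at [xo]: then [G - A^T mu] lies in
   [ker A], to which [G] is orthogonal, and it is orthogonal to the range of [A^T],
   so it vanishes. *)
Lemma optimal_kkt xo : is_optimal f A b xo -> exists ls, is_kkt xo ls.
Proof.
move=> xo_opt; pose G i := g i (xo i).
pose P := \sum_i A i *m (A i)^T.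
have [mu Pmu] : exists mu, P *m mu = \sum_i A i *m G i.
  apply: sym_mx_range_orth.
    by rewrite /P raddf_sum; apply: eq_bigr => i _ /=; rewrite trmx_mul trmxK.
  move=> c Pc.
  have ATc0 : \sum_i dotv ((A i)^T *m c) ((A i)^T *m c) = 0.
    rewrite -[RHS](dotv0r c) -Pc /P mulmx_suml dotv_sumr.
    by apply: eq_bigr => i _; rewrite -mulmxA (dotv_mulr (A i)).
  have ATc i : (A i)^T *m c = 0.
    by apply: dotv_eq0; exact: (psumr_eq0P (fun j _ => dotv_ge0 _) ATc0).
  rewrite dotv_suml big1 // => i _.
  by rewrite dotv_mull ATc dotv0r.
pose r i := G i - (A i)^T *m mu.
have Ar0 : \sum_i A i *m r i = 0.
  under eq_bigr do rewrite mulmxBr mulmxA.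
  by rewrite sumrB -mulmx_suml Pmu subrr.
have r0 : \sum_i dotv (r i) (r i) = 0.
  under eq_bigr do rewrite {1}/r dotvBl dotv_mull trmxK.
  by rewrite sumrB (optimal_orthogonal xo_opt r Ar0) -dotv_sumr Ar0 dotv0r subrr.
exists (- mu); split; first by case: xo_opt.
move=> i; have /dotv_eq0 /eqP := psumr_eq0P (fun j _ => dotv_ge0 (r j)) r0 (i := i) isT.
by rewrite subr_eq0 mulmxN -/(G i) => /eqP ->; rewrite subrr.
Qed.

End kkt.
Arguments resid_feasible_sub {R n d p A b} x {xs}.
Arguments kkt_fsum_le {R n d p f g A b} f_convex f_grad {xs ls} y.
Arguments kkt_saddle {R n d p f g A b} f_convex f_grad {alpha xs ls}.
Arguments optimal_kkt {R n d p f g A b} f_grad {xo}.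

Section lagrangian.
Context {R : realType} {n : nat} {d : 'I_n -> nat} {p : nat}.
Variables (f : forall i, 'cV[R]_(d i) -> R) (g : forall i, 'cV[R]_(d i) -> 'cV[R]_(d i))
  (A : forall i, 'M[R]_(p, d i)) (b : 'cV[R]_p) (alpha : R).
Hypotheses (f_convex : forall i, convex_fun (f i))
  (f_grad : forall i, is_gradient (f i) (g i)) (alpha_gt0 : 0 < alpha).

Definition aug_lagrangian_gradx (y : bvec d) (l : 'cV[R]_p) i : 'cV[R]_(d i) :=
  g i (y i) + (A i)^T *m l + alpha^-1 *: ((A i)^T *m resid A b y).

Definition wdist2 (y : bvec d) (l : 'cV[R]_p) (xs : bvec d) (ls : 'cV[R]_p) : R :=
  \sum_i dotv (y i - xs i) (y i - xs i) + alpha * dotv (l - ls) (l - ls).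

Definition dissipation (y : bvec d) (l : 'cV[R]_p) : R :=
  alpha * \sum_i dotv (aug_lagrangian_gradx y l i) (aug_lagrangian_gradx y l i)
  + dotv (resid A b y) (resid A b y).

Lemma dissipation_ge0 y l : 0 <= dissipation y l.
Proof.
apply: addr_ge0; last exact: dotv_ge0.
by apply: mulr_ge0; [exact: ltW | apply: sumr_ge0 => i _; exact: dotv_ge0].
Qed.

Lemma dissipation_eq0_kkt y l : dissipation y l = 0 -> is_kkt g A b y l.
Proof.
have gradx_ge0 : 0 <= alpha * \sum_i dotv (aug_lagrangian_gradx y l i)
                                         (aug_lagrangian_gradx y l i).
  by apply: mulr_ge0; [exact: ltW | apply: sumr_ge0 => i _; exact: dotv_ge0].
move=> /eqP; rewrite paddr_eq0 ?dotv_ge0 // => /andP[].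
rewrite mulf_eq0 gt_eqF //= => /eqP gradx0 /eqP /dotv_eq0 r0.
split => // i; have /dotv_eq0 := psumr_eq0P (fun j _ => dotv_ge0 _) gradx0 (i := i) isT.
by rewrite /aug_lagrangian_gradx r0 mulmx0 scaler0 addr0.
Qed.

Lemma wdist2_xx y l : wdist2 y l y l = 0.
Proof.
rewrite /wdist2 subrr dotv0l mulr0 addr0.
by apply: big1 => i _; rewrite subrr dotv0l.
Qed.

Lemma wdist2_ge_x y l xs ls i : dotv (y i - xs i) (y i - xs i) <= wdist2 y l xs ls.
Proof.
rewrite /wdist2 (bigD1 i) //= -addrA lerDl.
apply: addr_ge0; first by apply: sumr_ge0 => j _; exact: dotv_ge0.
by apply: mulr_ge0; [exact: ltW | exact: dotv_ge0].
Qed.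

Lemma wdist2_ge_l y l xs ls : alpha * dotv (l - ls) (l - ls) <= wdist2 y l xs ls.
Proof. by rewrite /wdist2 lerDr; apply: sumr_ge0 => i _; exact: dotv_ge0. Qed.

Lemma apgd_fieldE (y : bvec d) (l : 'cV[R]_p) i :
  - alpha *: (g i (y i) + (A i)^T *m l) - (A i)^T *m resid A b y =
  - alpha *: aug_lagrangian_gradx y l i.
Proof.
rewrite /aug_lagrangian_gradx [RHS]scalerDr scalerA mulNr mulfV ?gt_eqF //.
by rewrite scaleN1r.
Qed.

Section curve.
Variables (X : forall i, R -> 'cV[R]_(d i)) (L : R -> 'cV[R]_p) (t : R).
Variables (dX : forall i, 'cV[R]_(d i)) (dL : 'cV[R]_p).
Hypotheses (X_deriv : forall i, is_derive t 1 (X i) (dX i))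
  (L_deriv : is_derive t 1 L dL).
Let Xt (s : R) : bvec d := fun i => X i s.

Lemma is_derive_resid :
  is_derive t 1 (fun s => resid A b (Xt s)) (\sum_i A i *m dX i).
Proof.
have -> : (fun s => resid A b (Xt s)) = \sum_i (fun s => A i *m X i s) - cst b.
  by apply: funext => s; rewrite /resid /Xt /= fct_sumE.
have dAX : is_derive t 1 (\sum_i (fun s => A i *m X i s)) (\sum_i A i *m dX i).
  by apply: is_derive_sum => i; exact: is_derive_mulmx.
by have := is_deriveB dAX (is_derive_cst b t 1); rewrite subr0.
Qed.

Lemma is_derive_wdist2 (xs : bvec d) (ls : 'cV[R]_p) :
  is_derive t 1 (fun s => wdist2 (Xt s) (L s) xs ls)
    (2 * (\sum_i dotv (X i t - xs i) (dX i) + alpha * dotv (L t - ls) dL)).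
Proof.
have -> : (fun s => wdist2 (Xt s) (L s) xs ls) =
    \sum_i (fun s => dotv (X i s - xs i) (X i s - xs i))
    + alpha *: (fun s => dotv (L s - ls) (L s - ls)).
  by apply: funext => s; rewrite /wdist2 /Xt /= fct_sumE.
have dXs i : is_derive t 1 (fun s => X i s - xs i) (dX i).
  by have := is_deriveB (X_deriv i) (is_derive_cst (xs i) t 1); rewrite subr0.
have dLs : is_derive t 1 (fun s => L s - ls) dL.
  by have := is_deriveB L_deriv (is_derive_cst ls t 1); rewrite subr0.
have dW1 : is_derive t 1 (\sum_i (fun s => dotv (X i s - xs i) (X i s - xs i)))
    (\sum_i (dotv (dX i) (X i t - xs i) + dotv (X i t - xs i) (dX i))).
  by apply: is_derive_sum => i; exact: is_derive_dotv.
apply: (is_derive_eq (is_deriveD dW1 (is_deriveZ alpha (is_derive_dotv dLs dLs)))).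
under eq_bigr do rewrite dotvC.
rewrite big_split /= [dotv dL _]dotvC -[alpha *: _]/(alpha * _); ring.
Qed.

Lemma is_derive_aug_lagrangian :
  is_derive t 1 (fun s => aug_lagrangian f A b alpha (Xt s) (L s))
    (\sum_i dotv (aug_lagrangian_gradx (Xt t) (L t) i) (dX i)
     + dotv (resid A b (Xt t)) dL).
Proof.
have dF : is_derive t 1 (\sum_i (fun s => f i (X i s)))
    (\sum_i dotv (g i (X i t)) (dX i)).
  by apply: is_derive_sum => i; exact: is_derive_grad (f_grad i) (X_deriv i).
have dLr := is_derive_dotv L_deriv is_derive_resid.
have drr := is_deriveZ (2 * alpha)^-1 (is_derive_dotv is_derive_resid is_derive_resid).
have -> : (fun s => aug_lagrangian f A b alpha (Xt s) (L s)) =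
    \sum_i (fun s => f i (X i s)) + (fun s => dotv (L s) (resid A b (Xt s)))
    + (2 * alpha)^-1 *: (fun s => dotv (resid A b (Xt s)) (resid A b (Xt s))).
  by apply: funext => s; rewrite /aug_lagrangian /fsum /Xt /= fct_sumE.
apply: (is_derive_eq (is_deriveD (is_deriveD dF dLr) drr)).
rewrite /aug_lagrangian_gradx.
under [X in _ = X + _]eq_bigr do rewrite !dotvDl dotvZl !dotv_mull trmxK.
rewrite !big_split /= -mulr_sumr -!dotv_sumr /Xt.
rewrite [dotv dL _]dotvC [dotv (\sum_i _) _]dotvC -[_^-1 *: _]/(_^-1 * _).
by field; exact: lt0r_neq0.
Qed.

End curve.

Lemma wdist2_field_le (y : bvec d) l xs ls : is_kkt g A b xs ls ->
  \sum_i dotv (y i - xs i) (- alpha *: aug_lagrangian_gradx y l i)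
  + alpha * dotv (l - ls) (resid A b y) <= - dotv (resid A b y) (resid A b y).
Proof.
move=> [xs_feas xs_stat]; set r := resid A b y.
have term i : dotv (y i - xs i) (- alpha *: aug_lagrangian_gradx y l i) =
    - alpha * dotv (y i - xs i) (g i (y i) - g i (xs i))
    - alpha * dotv (A i *m (y i - xs i)) (l - ls) - dotv (A i *m (y i - xs i)) r.
  have /eqP : g i (xs i) = - ((A i)^T *m ls) by apply/eqP; rewrite -addr_eq0 xs_stat.
  move=> /eqP xs_i; rewrite /aug_lagrangian_gradx -/r !dotv_mull (mulmxBr _ l ls).
  rewrite dotvZr !dotvDr dotvZr xs_i !dotvNr.
  by field; exact: lt0r_neq0.
under eq_bigr do rewrite term.
rewrite !sumrB -!mulr_sumr -!dotv_suml -(resid_feasible_sub _ xs_feas) -/r.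
have : 0 <= alpha * \sum_i dotv (y i - xs i) (g i (y i) - g i (xs i)).
  apply: mulr_ge0; first exact: ltW.
  by apply: sumr_ge0 => i _; exact: gradient_monotone (f_convex i) (f_grad i) _ _.
rewrite [dotv r (l - ls)]dotvC; lra.
Qed.

Lemma aug_lagrangian_wdist2_ge (y : bvec d) l xs ls : is_kkt g A b xs ls ->
  fsum f xs <= aug_lagrangian f A b alpha y l + wdist2 y l xs ls.
Proof.
move=> kkt; have := kkt_fsum_le f_convex f_grad y kkt.
have S0 : 0 <= \sum_i dotv (y i - xs i) (y i - xs i).
  by apply: sumr_ge0 => i _; exact: dotv_ge0.
rewrite /aug_lagrangian /wdist2.
have -> : dotv l (resid A b y) = dotv (l - ls) (resid A b y) + dotv ls (resid A b y).
  by rewrite dotvBl subrK.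
move: S0 (resid A b y) (l - ls) => S0 r D.
(* The cross term [<D, r>] is absorbed by [(2 alpha)^-1 |r + alpha D|^2 >= 0]. *)
have cross : 0 <= (2 * alpha)^-1 * dotv r r + dotv D r + alpha / 2 * dotv D D.
  have -> : (2 * alpha)^-1 * dotv r r + dotv D r + alpha / 2 * dotv D D =
      (2 * alpha)^-1 * dotv (r + alpha *: D) (r + alpha *: D).
    rewrite !dotvDl !dotvDr !dotvZl !dotvZr [dotv r D]dotvC.
    by field; exact: lt0r_neq0.
  by rewrite mulr_ge0 ?dotv_ge0 // invr_ge0 mulr_ge0 // ltW.
have := mulr_ge0 (ltW alpha_gt0) (dotv_ge0 D); lra.
Qed.

End lagrangian.
Arguments dissipation_ge0 {R n d p g A b alpha} alpha_gt0 y l.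
Arguments dissipation_eq0_kkt {R n d p g A b alpha} alpha_gt0 {y l}.
Arguments wdist2_ge_x {R n d p alpha} alpha_gt0 y l xs ls i.
Arguments wdist2_ge_l {R n d p alpha} y l xs ls.
Arguments wdist2_xx {R n d p alpha} y l.
Arguments apgd_fieldE {R n d p g A b alpha} alpha_gt0 y l i.
Arguments is_derive_resid {R n d p A b X t dX}.
Arguments is_derive_wdist2 {R n d p alpha X L t dX dL}.
Arguments is_derive_aug_lagrangian {R n d p f g A b alpha} f_grad alpha_gt0 {X L t dX dL}.
Arguments wdist2_field_le {R n d p f g A b alpha} f_convex f_grad alpha_gt0 y l {xs ls}.
Arguments aug_lagrangian_wdist2_ge {R n d p f g A b alpha} f_convex f_grad alpha_gt0 y l {xs ls}.

Section cvg_matrix.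
Context {R : realType} {T : Type} {F : set_system T} {FF : Filter F}.

Lemma cvg_sum {V : normedModType R} {N : nat} (h : 'I_N -> T -> V) (L : 'I_N -> V) :
  (forall i, h i z @[z --> F] --> L i) -> \sum_i h i z @[z --> F] --> \sum_i L i.
Proof.
move=> hL; have add_cont : continuous (fun x : V * V => x.1 + x.2) := add_continuous.
exact: (@cvg_big V 'I_N +%R 0 xpredT add_cont T F (index_enum _) h L FF).
Qed.

Lemma cvg_mx {m k} (h : T -> 'M[R]_(m, k)) (L : 'M[R]_(m, k)) :
  (forall i j, h z i j @[z --> F] --> L i j) -> h z @[z --> F] --> L.
Proof.
move=> hL; apply/cvgrPdist_lt => e e0.
have : \forall z \near F, forall ij : 'I_m * 'I_k, `|L ij.1 ij.2 - h z ij.1 ij.2| < e.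
  by apply: filter_forall => -[i j]; exact: (cvgrPdist_lt _ _).1 (hL i j) e e0.
apply: filterS => z hz; rewrite /Num.Def.normr /= mx_normrE.
by apply: bigmax_lt => // ij _; rewrite !mxE; exact: hz.
Qed.

Lemma cvg_coord {m k} (h : T -> 'M[R]_(m, k)) (L : 'M[R]_(m, k)) i j :
  h z @[z --> F] --> L -> h z i j @[z --> F] --> L i j.
Proof. exact: continuous_cvg (@coord_continuous R m k i j L). Qed.

Lemma cvg_mulmx {m k l} (M : 'M[R]_(m, k)) (h : T -> 'M[R]_(k, l)) L :
  h z @[z --> F] --> L -> M *m h z @[z --> F] --> M *m L.
Proof.
move=> hL; apply: cvg_mx => i j; rewrite mxE; under eq_cvg do rewrite mxE.
by apply: cvg_sum => l'; apply: cvgM; [exact: cvg_cst | exact: cvg_coord].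
Qed.

Lemma cvg_dotv {k} (h1 h2 : T -> 'cV[R]_k) (L1 L2 : 'cV[R]_k) :
  h1 z @[z --> F] --> L1 -> h2 z @[z --> F] --> L2 ->
  dotv (h1 z) (h2 z) @[z --> F] --> dotv L1 L2.
Proof. by move=> h1L h2L; apply: cvg_sum => j; apply: cvgM; exact: cvg_coord. Qed.

End cvg_matrix.

Lemma normr_le_sqr_add1 {R : realDomainType} (c : R) : `|c| <= c ^+ 2 + 1.
Proof. by rewrite -real_normK ?num_real //; nra. Qed.

Lemma normr_lt_of_dotv_lt {R : realType} {k} (u : 'cV[R]_k) e :
  0 < e -> dotv u u < e ^+ 2 -> `|u| < e.
Proof.
move=> e0 ue; rewrite /Num.Def.normr /= mx_normrE.
apply: bigmax_lt => // -[j j'] _ /=; rewrite ord1.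
have := le_lt_trans (dotv_coord_le u j) ue.
by rewrite -real_normK ?num_real // ltr_sqr // nnegrE ltW.
Qed.

Lemma locally_lipschitz_continuous {R : realType} {k m} (h : 'cV[R]_k -> 'cV[R]_m) :
  locally_lipschitz h -> continuous h.
Proof.
move=> h_lip y; have [r [K [r0 hK]]] := h_lip y.
apply/(@cvgrPdist_lt _ _ _ (nbhs y) (nbhs_filter y)) => e e0.
have e'0 : 0 < e / (`|K| + 1) by rewrite divr_gt0 // ltr_wpDl.
near=> z.
have yz_r : ball y r z by near: z; exact: nbhsx_ballx.
have yz_e : ball y (e / (`|K| + 1)) z by near: z; exact: nbhsx_ballx.
apply: le_lt_trans (hK y z (ballxx _ r0) yz_r) _.
apply: (@le_lt_trans _ _ ((`|K| + 1) * `|y - z|)).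
  by apply: ler_wpM2r => //; apply: le_trans (ler_norm K) _; rewrite lerDl.
move: yz_e; rewrite mx_norm_ball /ball_ /= => yz_e.
by rewrite mulrC -ltr_pdivlMr // ltr_wpDl.
Unshelve. all: by end_near. Qed.

Lemma cV_compact {R : realType} {k} (B : 'I_k -> set R) : (forall j, compact (B j)) ->
  compact [set v : 'cV[R]_k | forall j, B j (v j 0)].
Proof.
move=> B_compact.
have -> : [set v : 'cV[R]_k | forall j, B j (v j 0)] =
    trmx @` [set v : 'rV[R]_k | forall j, B j (v 0 j)].
  apply/seteqP; split => [v Bv | _ [v Bv <-] j]; last by rewrite mxE.
  by exists v^T; [move=> j; rewrite mxE | rewrite trmxK].
apply: continuous_compact; last exact: rV_compact.
apply: continuous_subspaceT => v.
apply: (cvg_mx (FF := nbhs_filter v)) => i j; rewrite mxE.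
by under eq_cvg do rewrite mxE; exact: (cvg_coord (FF := nbhs_filter v)).
Qed.

Lemma compact_cluster_seq {S : topologicalType} {C : set S} {Z : nat -> S} :
  compact C -> (forall k, C (Z k)) ->
  exists2 z, C z & forall (B : set S) K, nbhs z B -> exists2 k, (K <= k)%N & B (Z k).
Proof.
move=> C_compact CZ.
have [|z [Cz Zz]] := C_compact (Z @ \oo) _; first by exists 0%N => // k _; exact: CZ.
exists z => // B K zB.
have ZK : (Z @ \oo) [set Z k | k in [set k | (K <= k)%N]].
  by exists K => // k /= Kk; exists k.
by have [_ [[k Kk <-] BZk]] := Zz _ _ ZK zB; exists k.
Qed.

Section state_space.
Import ArrowAsProduct.
Context {R : realType} {n : nat} {d : 'I_n -> nat} {p : nat}.
Variables (g : forall i, 'cV[R]_(d i) -> 'cV[R]_(d i))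
  (A : forall i, 'M[R]_(p, d i)) (b : 'cV[R]_p) (alpha : R).
Hypothesis g_lip : forall i, locally_lipschitz (g i).

Definition apgd_state := ((forall i, 'cV[R]_(d i)) * 'cV[R]_p)%type.

Lemma cvg_state_x (z0 : apgd_state) i : z.1 i @[z --> z0] --> z0.1 i.
Proof.
apply: (continuous_cvg _ (@proj_continuous _ (fun i => 'cV[R]_(d i)) i z0.1)).
exact: cvg_fst.
Qed.

Lemma cvg_state_resid (z0 : apgd_state) :
  resid A b z.1 @[z --> z0] --> resid A b z0.1.
Proof.
apply: cvgB; last exact: cvg_cst.
by apply: cvg_sum => i; apply: cvg_mulmx; exact: cvg_state_x.
Qed.

Lemma continuous_dissipation :
  continuous (fun z : apgd_state => dissipation g A b alpha z.1 z.2).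
Proof.
move=> z0; apply: cvgD; last by apply: cvg_dotv; exact: cvg_state_resid.
apply: cvgM; first exact: cvg_cst.
have gradx_cvg i : aug_lagrangian_gradx g A b alpha z.1 z.2 i @[z --> z0] -->
                   aug_lagrangian_gradx g A b alpha z0.1 z0.2 i.
  apply: cvgD; last by apply: cvgZ;
    [exact: cvg_cst | apply: cvg_mulmx; exact: cvg_state_resid].
  apply: cvgD; last by apply: cvg_mulmx; exact: cvg_snd.
  apply: (@continuous_cvg _ _ _ _ _ (fun z : apgd_state => z.1 i) (g i)).
    exact: locally_lipschitz_continuous.
  exact: cvg_state_x.
by apply: cvg_sum => i; exact: cvg_dotv.
Qed.

Lemma continuous_wdist2 xs ls :
  continuous (fun z : apgd_state => wdist2 alpha z.1 z.2 xs ls).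
Proof.
move=> z0; apply: cvgD.
  apply: cvg_sum => i; apply: cvg_dotv;
    by apply: cvgB; (exact: cvg_state_x || exact: cvg_cst).
apply: cvgM; first exact: cvg_cst.
by apply: cvg_dotv; apply: cvgB; (exact: cvg_snd || exact: cvg_cst).
Qed.

End state_space.
Arguments continuous_dissipation {R n d p g} A b alpha g_lip.
Arguments continuous_wdist2 {R n d p} alpha xs ls.

Section apgd_trajectory.
Import ArrowAsProduct.
Context {R : realType} {n : nat} {d : 'I_n -> nat} {p : nat}.
Variables (f : forall i, 'cV[R]_(d i) -> R) (g : forall i, 'cV[R]_(d i) -> 'cV[R]_(d i))
  (A : forall i, 'M[R]_(p, d i)) (b : 'cV[R]_p) (alpha : R).
Hypotheses (f_convex : forall i, convex_fun (f i))
  (f_grad : forall i, is_gradient (f i) (g i)) (alpha_gt0 : 0 < alpha)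
  (g_lip : forall i, locally_lipschitz (g i)).
Variables (x : forall i, R -> 'cV[R]_(d i)) (lam : R -> 'cV[R]_p).
Hypothesis apgd_sol : apgd_solution A b g alpha x lam.

Let xt (t : R) : bvec d := fun i => x i t.
Let gradx t := aug_lagrangian_gradx g A b alpha (xt t) (lam t).
Let W xs ls t := wdist2 alpha (xt t) (lam t) xs ls.

Lemma apgd_deriv (t : R) : 0 < t ->
  (forall i, is_derive t 1 (x i) (- alpha *: gradx t i)) /\
  is_derive t 1 lam (resid A b (xt t)).
Proof.
move=> t0; have [sol _] := apgd_sol; have [dx dlam] := sol t t0.
by split => // i; rewrite -apgd_fieldE //; exact: dx.
Qed.

Lemma wdist2_apgd_nonincr {xs ls} : is_kkt g A b xs ls ->
  forall u w, 0 < u -> u <= w -> W xs ls w <= W xs ls u.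
Proof.
move=> kkt u w u0; apply: (@derive_le0_nonincr _ _
  (fun t => 2 * (\sum_i dotv (x i t - xs i) (- alpha *: gradx t i)
                 + alpha * dotv (lam t - ls) (resid A b (xt t))))) => // [t ut|t ut].
  have [dx dlam] := apgd_deriv t (lt_le_trans u0 ut).
  exact: is_derive_wdist2 dx dlam xs ls.
have := wdist2_field_le f_convex f_grad alpha_gt0 (xt t) (lam t) kkt.
by have := dotv_ge0 (resid A b (xt t)); nra.
Qed.

(* [L_alpha + W + eps t] is nonincreasing while the dissipation stays above [eps],
   but [L_alpha + W] is bounded below by the optimal value. *)
Lemma dissipation_apgd_small {xs ls} : is_kkt g A b xs ls ->
  forall T eps, 0 < T -> 0 < eps ->
  exists2 t, T <= t & dissipation g A b alpha (xt t) (lam t) < eps.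
Proof.
move=> kkt T eps T0 eps0.
have [//|no_t] :=
  pselect (exists2 t, T <= t & dissipation g A b alpha (xt t) (lam t) < eps).
have dis_ge t : T <= t -> eps <= dissipation g A b alpha (xt t) (lam t).
  by move=> Tt; rewrite leNgt; apply/negP => dis_lt; apply: no_t; exists t.
pose U t := aug_lagrangian f A b alpha (xt t) (lam t) + W xs ls t.
have U_ge t : fsum f xs <= U t.
  exact: (aug_lagrangian_wdist2_ge f_convex f_grad alpha_gt0 (xt t) (lam t) kkt).
have phi_nonincr : forall u w, T <= u -> u <= w -> U w + eps * w <= U u + eps * u.
  apply: (@derive_le0_nonincr _ (fun t => U t + eps * t)
    (fun t => \sum_i dotv (gradx t i) (- alpha *: gradx t i)
              + dotv (resid A b (xt t)) (resid A b (xt t))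
              + 2 * (\sum_i dotv (x i t - xs i) (- alpha *: gradx t i)
                     + alpha * dotv (lam t - ls) (resid A b (xt t))) + eps)) => t Tt.
    have [dx dlam] := apgd_deriv t (lt_le_trans T0 Tt).
    have dL := is_derive_aug_lagrangian (A := A) (b := b) f_grad alpha_gt0 dx dlam.
    have dW := is_derive_wdist2 (alpha := alpha) dx dlam xs ls.
    have deps : is_derive t 1 (fun s : R => eps * s) eps.
      by have := is_deriveZ eps (is_derive_id t 1); rewrite [_ *: 1]mulr1.
    exact (is_deriveD (is_deriveD dL dW) deps).
  have := wdist2_field_le f_convex f_grad alpha_gt0 (xt t) (lam t) kkt.
  have := dis_ge t (ltW Tt); rewrite /dissipation -/(gradx t) /xt.
  under [X in X + _ + _ + _ <= _]eq_bigr do rewrite dotvZr.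
  rewrite -mulr_sumr; lra.
pose t1 := T + (U T - fsum f xs + 1) / eps.
have Tt1 : T <= t1 by rewrite lerDl divr_ge0 ?(ltW eps0) //; have := U_ge T; lra.
have := phi_nonincr T t1 (lexx T) Tt1; have := U_ge t1.
rewrite /t1 mulrDr mulrCA mulfV ?gt_eqF // mulr1; lra.
Qed.

Lemma apgd_bounded {xs ls} : is_kkt g A b xs ls ->
  exists2 C : set apgd_state, compact C & forall t, 1 <= t -> C (xt t, lam t).
Proof.
move=> kkt; pose M := W xs ls 1 / alpha + W xs ls 1 + 1.
have W_le t : 1 <= t -> W xs ls t <= W xs ls 1.
  exact: wdist2_apgd_nonincr kkt 1 t ltr01.
have W1_ge0 : 0 <= W xs ls 1.
  by rewrite /W; apply: le_trans _ (wdist2_ge_l _ _ _ _); rewrite mulr_ge0 ?dotv_ge0 ?ltW.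
pose box k (c : 'cV[R]_k) :=
  [set v : 'cV[R]_k | forall j, `[c j 0 - M, c j 0 + M]%classic (v j 0)].
exists ([set y : forall i, 'cV[R]_(d i) | forall i, box _ (xs i) (y i)] `*` box _ ls).
  have box_compact k (c : 'cV[R]_k) : compact (box k c).
    apply: (cV_compact (fun j => `[c j 0 - M, c j 0 + M]%classic)) => j.
    exact: segment_compact.
  by apply: compact_setX => //; exact: (@tychonoff _ _ (fun i => box _ (xs i))).
move=> t t1; split => [i j|j] /=; rewrite in_itv /= -ler_distl.
  apply: le_trans (normr_le_sqr_add1 _) _.
  have := le_trans (wdist2_ge_x alpha_gt0 (xt t) (lam t) xs ls i) (W_le t t1).
  have := dotv_coord_le (x i t - xs i) j; rewrite !mxE.
  have : 0 <= W xs ls 1 / alpha by rewrite divr_ge0 // ltW.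
  rewrite /M; lra.
apply: le_trans (normr_le_sqr_add1 _) _.
have := le_trans (wdist2_ge_l (xt t) (lam t) xs ls) (W_le t t1).
rewrite -ler_pdivlMl // mulrC => lam_le.
have := dotv_coord_le (lam t - ls) j; rewrite !mxE.
rewrite /M; lra.
Qed.

Lemma apgd_cluster_kkt {xs0 ls0} : is_kkt g A b xs0 ls0 ->
  exists xs ls, is_kkt g A b xs ls /\
    forall eps, 0 < eps -> exists2 t, 0 < t & W xs ls t < eps.
Proof.
move=> kkt0; have [C C_compact C_traj] := apgd_bounded kkt0.
have /choice [s s_spec] : forall k : nat, exists t,
    1 <= t /\ dissipation g A b alpha (xt t) (lam t) < k.+1%:R^-1.
  move=> k; have [|t t1 dis] := dissipation_apgd_small kkt0 1 (k.+1%:R^-1) ltr01.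
    by rewrite invr_gt0.
  by exists t.
have [[xs ls] _ cluster] := compact_cluster_seq C_compact (fun k => C_traj _ (s_spec k).1).
have near_z0 (P : apgd_state -> R) e : continuous P -> 0 < e ->
    nbhs ((xs, ls) : apgd_state) [set z | P (xs, ls) < P z + e /\ P z < P (xs, ls) + e].
  move=> P_cont e0; apply: filterS (cvgr_dist_lt _ _ (P_cont (xs, ls)) _ e0) => z /=.
  by rewrite ltr_distlC => /andP[]; lra.
have kkt : is_kkt g A b xs ls.
  apply: (dissipation_eq0_kkt alpha_gt0); apply/eqP.
  rewrite eq_le (dissipation_ge0 alpha_gt0) andbT.
  apply/ler_addgt0Pr => e e0; rewrite add0r; have e20 := divr_gt0 e0 (ltr0n R 2).
  have [K K_lt] := ltr_add_invr e20; rewrite add0r in K_lt.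
  have near_dis := near_z0 _ _ (continuous_dissipation A b alpha g_lip) e20.
  have [k Kk [/= dis_lt _]] := cluster _ K near_dis.
  have kK : k.+1%:R^-1 <= K.+1%:R^-1 :> R by rewrite lef_pV2 ?posrE // ler_nat ltnS.
  rewrite [e]splitr; apply/ltW/(lt_trans dis_lt); rewrite ltrD2r.
  exact: lt_trans (lt_le_trans (s_spec k).2 kK) K_lt.
exists xs, ls; split => // eps eps0.
have near_W := near_z0 _ _ (continuous_wdist2 alpha xs ls) eps0.
have [k _ [_ /= W_lt]] := cluster _ 0%N near_W.
exists (s k); first exact: lt_le_trans ltr01 (s_spec k).1.
by move: W_lt; rewrite wdist2_xx add0r.
Qed.

Lemma apgd_cvg_of_wdist2_small {xs ls} : is_kkt g A b xs ls ->
  (forall eps, 0 < eps -> exists2 t, 0 < t & W xs ls t < eps) ->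
  (forall i, x i t @[t --> +oo] --> xs i) /\ lam t @[t --> +oo] --> ls.
Proof.
move=> kkt W_small.
have W_near eps : 0 < eps -> \forall t \near +oo, W xs ls t < eps.
  move=> eps0; have [t0 t00 W_lt] := W_small eps eps0.
  exists t0; split => [|t t0t]; first exact: num_real.
  exact: le_lt_trans (wdist2_apgd_nonincr kkt t0 t t00 (ltW t0t)) W_lt.
split => [i|]; apply/cvgrPdist_lt => e e0.
  apply: filterS (W_near _ (exprn_gt0 2 e0)) => t W_lt.
  apply: normr_lt_of_dotv_lt; rewrite // -opprB dotvNl dotvNr opprK.
  exact: le_lt_trans (wdist2_ge_x alpha_gt0 (xt t) (lam t) xs ls i) W_lt.
apply: filterS (W_near _ (mulr_gt0 alpha_gt0 (exprn_gt0 2 e0))) => t W_lt.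
apply: normr_lt_of_dotv_lt; rewrite // -opprB dotvNl dotvNr opprK -(ltr_pM2l alpha_gt0).
exact: le_lt_trans (wdist2_ge_l (xt t) (lam t) xs ls) W_lt.
Qed.

End apgd_trajectory.
Arguments apgd_cluster_kkt {R n d p f g A b alpha} f_convex f_grad alpha_gt0 g_lip {x lam}
  apgd_sol {xs0 ls0}.
Arguments apgd_cvg_of_wdist2_small {R n d p f g A b alpha} f_convex f_grad alpha_gt0 {x lam}
  apgd_sol {xs ls}.

Theorem proposition1 (R : realType) (n : nat) (d : 'I_n -> nat) (p : nat)
    (f : forall i : 'I_n, 'cV[R]_(d i) -> R)
    (g : forall i : 'I_n, 'cV[R]_(d i) -> 'cV[R]_(d i))
    (A : forall i : 'I_n, 'M[R]_(p, d i)) (b : 'cV[R]_p) (alpha : R) :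
  (0 < n)%N ->
  (forall i : 'I_n, convex_fun (f i)) ->
  (forall i : 'I_n, is_gradient (f i) (g i)) ->
  (forall i : 'I_n, locally_lipschitz (g i)) ->
  (exists x : bvec d, feasible A b x) ->
  (exists x : bvec d, is_optimal f A b x) ->
  0 < alpha ->
  forall (x : forall i : 'I_n, R -> 'cV[R]_(d i)) (lam : R -> 'cV[R]_p),
    apgd_solution A b g alpha x lam ->
    exists (xs : bvec d) (ls : 'cV[R]_p),
      is_saddle_point f A b alpha xs ls /\
      (forall i : 'I_n, x i t @[t --> +oo] --> xs i) /\
      lam t @[t --> +oo] --> ls.
Proof.
move=> _ f_convex f_grad g_lip _ [xo xo_opt] alpha_gt0 x lam apgd_sol.
have [ls0 kkt0] := optimal_kkt f_grad xo_opt.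
have [xs [ls [kkt W_small]]] :=
  apgd_cluster_kkt f_convex f_grad alpha_gt0 g_lip apgd_sol kkt0.
exists xs, ls; split; first exact: (kkt_saddle f_convex f_grad alpha_gt0 kkt).
exact: (apgd_cvg_of_wdist2_small f_convex f_grad alpha_gt0 apgd_sol kkt W_small).
Qed.
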